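(* Let $\Sigma$ be an alphabet with $|\Sigma|\ge3$, $k\ge1$, and $f\colon(\Sigma^* )^k\to\Sigma^*$ RCP. Then exactly one of the following holds: ($C_1$) there exists $b\in\Sigma$ such that $f(x_1,\ldots,x_k)\in b\Sigma^*$ for all $x_1,\ldots,x_k\in\Sigma^*$; ($C_2$) there exists $i\in\{1,\ldots,k\}$ such that $f(x_1,\ldots,x_k)\in x_i\Sigma^*$ for all $x_1,\ldots,x_k\in\Sigma^*$; ($C_3$) $f(x_1,\ldots,x_k)=\varepsilon$ for all $x_1,\ldots,x_k\in\Sigma^*$.
   Context: $\Sigma^*$ is the free monoid over $\Sigma$ (finite words, concatenation, empty word $\varepsilon$). For a word $w$, $w\Sigma^*$ denotes the set of words having $w$ as a prefix. A function $f\colon(\Sigma^* )^k\to\Sigma^*$ is RCP if for every monoid morphism $\varphi\colon\Sigma^*\to\Sigma^*$ and all $u_1,\ldots,u_k,v_1,\ldots,v_k$ with $\varphi(u_i)=\varphi(v_i)$ for all $i$, we have $\varphi(f(u_1,\ldots,u_k))=\varphi(f(v_1,\ldots,v_k))$. *)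

From mathcomp Require Import all_boot.
Set Implicit Arguments. Unset Strict Implicit. Unset Printing Implicit Defensive.

Definition is_monoid_morphism (S : Type) (phi : seq S -> seq S) : Prop :=
  phi [::] = [::] /\ forall u v : seq S, phi (u ++ v) = phi u ++ phi v.

(* A k-ary word function is represented as f : ('I_k -> seq S) -> seq S. *)
Definition RCP (S : Type) (k : nat) (f : ('I_k -> seq S) -> seq S) : Prop :=
  forall (phi : seq S -> seq S), is_monoid_morphism phi ->
  forall u v : 'I_k -> seq S, (forall i, phi (u i) = phi (v i)) ->
    phi (f u) = phi (f v).

(* "w is in p Sigma^*", i.e. p is a prefix of w *)
Definition has_prefix (S : Type) (p w : seq S) : Prop := exists r, w = p ++ r.

From mathcomp Require Import all_boot.
Set Implicit Arguments. Unset Strict Implicit. Unset Printing Implicit Defensive.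

(* Write [diag r] for the input all of whose components are the one-letter word r.
   The RCP property lets us compare f on two inputs that a morphism identifies;
   we use letter renamings, letter erasures, and the expansion of a fresh letter
   into a word (three letters guarantee a fresh one).  Renamings carry f (diag r)
   to f (diag q), so either some f (diag r) is empty, or some f (diag r) starts
   with a letter b <> r, or every f (diag r) starts with r.
   - If f (diag r) is empty, f vanishes on inputs over the single letter r, hence
     everywhere, by mapping every letter to r (C3).
   - If f (diag r) starts with b <> r, this head propagates from the inputs
     [diag q] to inputs over one letter, then over two letters; since u is a
     prefix of w as soon as this holds for the projections of u and w onto every
     pair of letters, f x starts with b for all x (C1).
   - If every f (diag r) starts with r, the sets J of positions for which the
     input with r on J and p elsewhere yields a word starting with r do not
     depend on r <> p and form an ultrafilter on the positions; it is principal,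
     generated by some i.  Putting a fresh letter at position i and expanding it
     back to x i shows that x i is a prefix of f x for inputs x over two letters,
     hence for all x (C2). *)

Section Words.
Variable Sigma : eqType.
Implicit Types (c d p q s t u v : Sigma) (w : seq Sigma) (o : option Sigma).

Definition hom (h : Sigma -> seq Sigma) w := flatten (map h w).

Lemma hom_morphism h : is_monoid_morphism (hom h).
Proof. by split => // w1 w2; rewrite /hom map_cat flatten_cat. Qed.

Lemma hom_cat h w1 w2 : hom h (w1 ++ w2) = hom h w1 ++ hom h w2.
Proof. by case: (hom_morphism h). Qed.

Lemma hom_letters (g : Sigma -> Sigma) w : hom (fun c => [:: g c]) w = map g w.
Proof. by rewrite /hom; elim: w => //= c w ->. Qed.

Lemma hom_filter (P : pred Sigma) w :
  hom (fun c => if P c then [:: c] else [::]) w = filter P w.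
Proof. by rewrite /hom; elim: w => //= c w ->; case: (P c). Qed.

Definition rename u v c := if c == u then v else c.

Lemma rename_src u v : rename u v u = v.
Proof. by rewrite /rename eqxx. Qed.

Lemma rename_tgt u v : rename u v v = v.
Proof. by rewrite /rename; case: eqP. Qed.

Lemma rename_id u v c : c != u -> rename u v c = c.
Proof. by rewrite /rename => /negbTE->. Qed.

Lemma rename_idem u v c : rename u v (rename u v c) = rename u v c.
Proof.
by rewrite /rename; case: (c =P u) => [_|/eqP/negbTE->] //; case: ifP.
Qed.

Definition expand s w0 c := if c == s then w0 else [:: c].

Lemma hom_expand_id s w0 w : s \notin w -> hom (expand s w0) w = w.
Proof.
elim: w => //= c w IH; rewrite inE negb_or => /andP[sc /IH{}IH].
by rewrite /hom /= -/(hom _ w) IH /expand eq_sym (negbTE sc).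
Qed.

Lemma neq_odflt t s o : s != odflt t o -> o != Some s.
Proof. by apply: contra => /eqP ->. Qed.

Lemma ohead_map (g : Sigma -> Sigma) w : ohead (map g w) = omap g (ohead w).
Proof. by case: w. Qed.

Lemma ohead_rename_eq u v w1 w2 o :
  map (rename u v) w1 = map (rename u v) w2 -> ohead w2 = o ->
  o != Some u -> o != Some v -> ohead w1 = o.
Proof.
move=> E <-; case: w2 E => [|d w2]; case: w1 => [|c w1] //= [+ _].
by rewrite /rename; case: eqP => [->|_]; case: eqP => [->|_] //= ->;
  move=> /eqP ? /eqP ?.
Qed.

Lemma ohead_rename_to u v w1 w2 :
  map (rename u v) w1 = map (rename u v) w2 ->
  ohead w2 = Some u \/ ohead w2 = Some v -> ohead w1 = Some u \/ ohead w1 = Some v.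
Proof.
case: w2 => [|d w2] E; first by case.
case: w1 E => [|c w1] //= [E _] Hd.
have Ed : rename u v d = v by case: Hd => -[->]; rewrite ?rename_src ?rename_tgt.
by move: E; rewrite Ed /rename; case: eqP => [->|_ ->]; [left|right].
Qed.

Lemma ohead_erase s w1 w2 o :
  filter (predC1 s) w1 = filter (predC1 s) w2 -> ohead w2 = o -> o != Some s ->
  ohead w1 = o \/ ohead w1 = Some s.
Proof.
move=> E <-; case: w1 E => [|c w1] /=.
  case: w2 => [|d w2] /=; first by left.
  by case: (d =P s) => [->|/eqP ds]; rewrite ?eqxx ?ds.
case: (c =P s) => [->|/eqP cs] /= E; first by right.
case: w2 E => //= d w2; case: (d =P s) => [->|/eqP ds]; rewrite ?eqxx ?ds ?cs //.
by move=> [->]; left.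
Qed.

Lemma ohead_expand s w0 t w1 w2 o :
  hom (expand s w0) w1 = hom (expand s w0) w2 -> ohead w2 = o ->
  o != Some s -> ohead w0 = Some t -> o != Some t -> ohead w1 = o.
Proof.
move=> E <-; rewrite /hom in E; case: w2 E => [|d w2] /=.
  by case: w1 => //= c w1; rewrite /expand; case: eqP => _; case: w0.
rewrite /expand; case: (d =P s) => [->|_ E]; first by rewrite eqxx.
case: w1 E => //= c w1; case: (c =P s) => _; last by move=> [->].
by case: w0 => //= e w0 [-> _] _ [->]; rewrite eqxx.
Qed.

Lemma has_prefix_filter (P : pred Sigma) w1 w2 :
  has_prefix w1 w2 -> has_prefix (filter P w1) (filter P w2).
Proof. by case=> r ->; exists (filter P r); rewrite filter_cat. Qed.

Lemma expand_prefix s w0 w : s \notin take (size w0) w ->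
  has_prefix w0 (hom (expand s w0) w) -> has_prefix w0 w.
Proof.
move=> s_take [r]; rewrite -[w](cat_take_drop (size w0)) hom_cat hom_expand_id //.
have [le|lt] := leqP (size w0) (size w).
  move/eqP; rewrite eqseq_cat ?size_takel // => /andP[/eqP -> _].
  by exists (drop (size w0) w).
by rewrite drop_oversize ?cats0 => [->|]; [exists r | exact: ltnW].
Qed.

Lemma split_run p w : exists j rest, w = nseq j p ++ rest /\ ohead rest != Some p.
Proof.
elim: w => [|c w [j [rest [-> rp]]]]; first by exists 0, [::].
case: (c =P p) => [->|/eqP cp]; first by exists j.+1, rest.
by exists 0, (c :: nseq j p ++ rest).
Qed.

Lemma run_expand_prefix p s w0 m j rest :
  s != p -> ohead rest != Some p -> ohead rest != Some s ->
  has_prefix (nseq m p) (hom (expand s w0) (nseq j p ++ rest)) -> m <= j.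
Proof.
move=> sp rp rs [r]; rewrite hom_cat hom_expand_id; last first.
  by rewrite mem_nseq negb_and sp orbT.
move=> E; rewrite leqNgt; apply/negP => lt_jm; move: E.
rewrite -(subnKC (ltnW lt_jm)) nseqD -catA => /eqP.
rewrite eqseq_cat ?size_nseq // eqxx /= => /eqP.
have : 0 < m - j by rewrite subn_gt0.
case: (m - j) => // n _; case: rest rp rs => //= c rest.
rewrite /hom /= /expand; case: (c =P s) => [-> _ /negP[] //|_ cp _ [cp']].
by rewrite cp' eqxx in cp.
Qed.

End Words.

Section FiniteAlphabet.
Variable Sigma : finType.
Implicit Types (a c p q s : Sigma) (u w : seq Sigma) (o : option Sigma).

Lemma exists_notin (l : seq Sigma) : size l < #|Sigma| -> exists c, c \notin l.
Proof.
move=> lt; case: (pickP [pred c | c \notin l]) => [c|none]; first by exists c.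
suff: #|Sigma| <= size l by rewrite leqNgt lt.
apply: leq_trans (card_size l); apply: subset_leq_card; apply/subsetP => c _.
by move: (none c) => /= /negbFE.
Qed.

Lemma exists_fresh a c : 2 < #|Sigma| -> exists s, s != a /\ s != c.
Proof.
by move=> /(@exists_notin [:: a; c]) [s]; rewrite !inE negb_or => /andP; exists s.
Qed.

Lemma exists_distinct3 : 2 < #|Sigma| -> exists r u p : Sigma, [/\ r != u, r != p & u != p].
Proof.
move=> card3; have [p _] := exists_notin (l := [::]) (ltnW (ltnW card3)).
have [r [rp _]] := exists_fresh p p card3.
have [u [up ur]] := exists_fresh p r card3.
by exists r, u, p; split => //; rewrite eq_sym.
Qed.

Lemma ohead_pinned a w o : 2 < #|Sigma| ->
  (forall s, s != a -> ohead w = o \/ ohead w = Some s) -> ohead w = o.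
Proof.
move=> card3 H; have [s1 [s1a _]] := exists_fresh a a card3.
have [s2 [s2a s21]] := exists_fresh a s1 card3.
case: (H s1 s1a) => // E1; case: (H s2 s2a) => // E2.
by move: E2; rewrite E1 => -[E]; rewrite E eqxx in s21.
Qed.

Lemma prefix_of_pair_filters u w : 1 < #|Sigma| ->
  (forall p q, p != q ->
     has_prefix (filter (mem [:: p; q]) u) (filter (mem [:: p; q]) w)) ->
  has_prefix u w.
Proof.
move=> card2; elim: u w => [|a u IH] w pairs; first by exists w.
have [q] := exists_notin (l := [:: a]) card2; rewrite inE eq_sym => aq.
case: w pairs => [|c w] pairs; first by have [r] := pairs a q aq; rewrite /= inE eqxx.
have ca : c = a.
  apply/eqP; apply: contraT; rewrite eq_sym => ac; have [r] := pairs a c ac.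
  by rewrite /= !inE !eqxx orbT => -[ca]; rewrite ca eqxx in ac.
subst c; have [r ->] : has_prefix u w; last by exists r.
apply: IH => p p' pp'; have [r] := pairs p p' pp'; rewrite /=.
by case: ifP => _ => [[->]|->]; exists r.
Qed.

End FiniteAlphabet.

Section RCPFunction.
Variables (Sigma : finType) (k : nat) (f : ('I_k -> seq Sigma) -> seq Sigma).
Hypothesis f_RCP : RCP f.
Hypothesis card3 : 2 < #|Sigma|.
Local Notation input := ('I_k -> seq Sigma).
Implicit Types (c p q r s t u v : Sigma) (w : seq Sigma) (o : option Sigma).
Implicit Types (x y : input) (l : 'I_k -> Sigma) (A B : pred 'I_k).

Lemma rcp_hom h x y :
  (forall j, hom h (x j) = hom h (y j)) -> hom h (f x) = hom h (f y).
Proof. exact: f_RCP (hom_morphism h) x y. Qed.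

Lemma rcp_map (g : Sigma -> Sigma) x y :
  (forall j, map g (x j) = map g (y j)) -> map g (f x) = map g (f y).
Proof. by move=> E; rewrite -!hom_letters; apply: rcp_hom => j; rewrite !hom_letters. Qed.

Lemma rcp_filter (P : pred Sigma) x y :
  (forall j, filter P (x j) = filter P (y j)) -> filter P (f x) = filter P (f y).
Proof. by move=> E; rewrite -!hom_filter; apply: rcp_hom => j; rewrite !hom_filter. Qed.

Lemma f_ext x y : x =1 y -> f x = f y.
Proof. by move=> E; rewrite -[f x]map_id -[f y]map_id; apply: rcp_map => j; rewrite E. Qed.

Definition upd x i w : input := fun j => if j == i then w else x j.

Definition total_size x := \sum_(j < k) size (x j).

Lemma total_size_upd x i w :
  size w < size (x i) -> total_size (upd x i w) < total_size x.
Proof.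
move=> lt; rewrite /total_size (bigD1 i) //= [X in _ < X](bigD1 i) //= /upd eqxx.
by rewrite (eq_bigr (fun j => size (x j))) ?ltn_add2r // => j /negbTE ->.
Qed.

Lemma prefix_expand_anchor s x i : s \notin x i ->
  ohead (f (upd x i [:: s])) = Some s -> has_prefix (x i) (hom (expand s (x i)) (f x)).
Proof.
move=> s_xi; rewrite (rcp_hom (y := upd x i [:: s])) => [|j].
  case: (f _) => //= c w [->]; rewrite /hom /= /expand eqxx.
  by exists (hom (expand s (x i)) w).
rewrite /upd; case: eqP => [->|//]; rewrite hom_expand_id //.
by rewrite /hom /= /expand eqxx cats0.
Qed.

Section Extension.
Variables (x0 : input) (t : Sigma) (o : option Sigma).
Hypotheses (o_t : o != Some t) (f_x0 : ohead (f x0) = o).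

Lemma ohead_f_fill y :
  (forall j, y j = x0 j \/ (x0 j = [:: t] /\ y j = [::])) -> ohead (f y) = o.
Proof.
move=> y_x0; apply: (ohead_pinned (a := odflt t o)) => // s /neq_odflt o_s.
pose y1 j := if y j == x0 j then y j else [:: s].
(* Renaming s to t sends y1 to x0, erasing s sends y1 to y. *)
have f_y1 : ohead (f y1) = o.
  apply: ohead_rename_eq (rcp_map _) f_x0 o_s o_t => j; rewrite /y1.
  by case: (y_x0 j) => [->|[-> ->]]; rewrite ?eqxx //= rename_src rename_tgt.
apply: ohead_erase (rcp_filter _) f_y1 o_s => j; rewrite /y1.
by case: (y_x0 j) => [->|[-> ->]]; rewrite ?eqxx //= eqxx.
Qed.

Lemma ohead_f_extend y :
  (forall j, y j = x0 j \/ (x0 j = [:: t] /\ all (pred1 t) (y j))) -> ohead (f y) = o.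
Proof.
have [n] := ubnP (total_size y); elim: n y => // n IHn y /ltnSE y_n y_x0.
case: (pickP (fun j => (y j != x0 j) && (1 < size (y j)))) => [i /andP[yi long]|short].
  have [x0i yi_t] : x0 i = [:: t] /\ all (pred1 t) (y i).
    by case: (y_x0 i) => // E; rewrite E eqxx in yi.
  have [s [st /neq_odflt o_s]] := exists_fresh t (odflt t o) card3.
  have s_yi : s \notin y i.
    by apply/negP => /(allP yi_t) /= /eqP st'; rewrite st' eqxx in st.
  (* Shrink y i to the fresh letter s: renaming s to t gives a smaller input,
     expanding s into y i gives y back. *)
  have f_ti : ohead (f (upd y i [:: t])) = o.
    apply: IHn => [|j]; first exact: leq_trans (@total_size_upd y i [:: t] long) y_n.
    by rewrite /upd; case: eqP => [->|_]; [right; rewrite x0i /= eqxx | exact: y_x0].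
  have f_si : ohead (f (upd y i [:: s])) = o.
    apply: ohead_rename_eq (rcp_map _) f_ti o_s o_t => j; rewrite /upd.
    by case: eqP => //= _; rewrite rename_src rename_tgt.
  have yi_head : ohead (y i) = Some t.
    by case: (y i) yi_t long => //= c w /andP[ct _]; rewrite (eqP ct).
  apply: ohead_expand (rcp_hom _) f_si o_s yi_head o_t => j.
  rewrite /upd; case: eqP => [->|//]; rewrite hom_expand_id //.
  by rewrite /hom /= /expand eqxx cats0.
apply: ohead_f_fill => j; case: (y_x0 j) => [|[x0j yj_t]]; first by left.
move: (short j); case: (eqVneq (y j) (x0 j)) => [->|_ /=]; first by left.
rewrite x0j; case: (y j) yj_t => [|c [|d w]] //=; first by right.
by rewrite andbT => /eqP-> _; left.
Qed.

End Extension.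

Lemma prefix_from_pairs (g : input -> seq Sigma) :
  (forall (P : pred Sigma) x, filter P (g (fun j => filter P (x j))) = filter P (g x)) ->
  (forall p q x, p != q -> (forall j, {subset x j <= [:: p; q]}) ->
     has_prefix (g x) (f x)) ->
  forall x, has_prefix (g x) (f x).
Proof.
move=> g_filter pairs x; apply: prefix_of_pair_filters (ltnW card3) _ => p q pq.
rewrite -g_filter (rcp_filter (y := fun j => filter (mem [:: p; q]) (x j))) => [|j].
  by apply/has_prefix_filter/(pairs p q) => // j c; rewrite mem_filter => /andP[].
by rewrite filter_id.
Qed.

Definition singles l : input := fun j => [:: l j].
Definition diag c : input := singles (fun=> c).
Definition mark A c q : input := singles (fun j => if A j then c else q).
Definition anchored A c (ls : seq Sigma) y :=
  forall j, if A j then y j = [:: c] else {subset y j <= ls}.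

Lemma ohead_singles_rename u v l1 l2 o :
  (forall j, rename u v (l1 j) = rename u v (l2 j)) ->
  ohead (f (singles l2)) = o -> o != Some u -> o != Some v -> ohead (f (singles l1)) = o.
Proof. by move=> E; apply: ohead_rename_eq; apply: rcp_map => j; rewrite /= E. Qed.

Lemma anchored_sub A c ls ls' y :
  {subset ls <= ls'} -> anchored A c ls y -> anchored A c ls' y.
Proof. by move=> sub yA j; move: (yA j); case: (A j) => // yj d /yj /sub. Qed.

Lemma ohead_f_anchored_unary A c q y : q != c -> ohead (f (mark A c q)) = Some c ->
  anchored A c [:: q] y -> ohead (f y) = Some c.
Proof.
move=> qc fm yA; apply: (ohead_f_extend (t := q) _ fm) => [|j]; first by rewrite /= eq_sym.
move: (yA j); rewrite /mark /singles; case: (A j) => [->|yq]; first by left.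
by right; split=> //; apply/allP => d /yq; rewrite inE.
Qed.

Lemma ohead_f_anchored_pair A c p q y :
  (forall u, u != c -> ohead (f (mark A c u)) = Some c) -> p != c -> q != c ->
  anchored A c [:: p; q] y -> ohead (f y) = Some c.
Proof.
move=> fm pc qc yA.
have erase u v : u != c -> v != c -> anchored A c [:: u; v] y ->
    ohead (f y) = Some c \/ ohead (f y) = Some u.
  move=> uc vc yA'; have cu : c != u by rewrite eq_sym.
  apply: (ohead_erase (w2 := f (fun j => filter (predC1 u) (y j)))) => //.
    by apply: rcp_filter => j; rewrite filter_id.
  apply: (ohead_f_anchored_unary vc (fm v vc)) => j; move: (yA' j).
  case: (A j) => [->|yuv]; first by rewrite /= cu.
  by move=> d; rewrite mem_filter => /andP[/= du /yuv]; rewrite !inE (negbTE du).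
case: (eqVneq p q) pc yA => [->|pq] pc yA.
  apply: ohead_f_anchored_unary qc (fm q qc) _.
  by apply: anchored_sub yA => d; rewrite !inE orbb.
have yA' : anchored A c [:: q; p] y by apply: anchored_sub yA => d; rewrite !inE orbC.
case: (erase p q pc qc yA) => // fp; case: (erase q p qc pc yA') => // fq.
by move: fq; rewrite fp => -[pq']; rewrite pq' eqxx in pq.
Qed.

Lemma rcp_nil_of_diag r : f (diag r) = [::] -> forall x, f x = [::].
Proof.
move=> fr x; pose y j := map (fun=> r) (x j).
have fy : ohead (f y) = None.
  apply: (ohead_f_extend (x0 := diag r) (t := r)); rewrite ?fr // => j.
  by right; split=> //; apply/allP => d /mapP[e _ ->] /=.
have : map (fun=> r) (f x) = map (fun=> r) (f y).
  by apply: rcp_map => j; rewrite /y -map_comp.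
by case: (f y) fy => // _; case: (f x).
Qed.

Lemma ohead_f_diag_transfer r q o : o != Some q -> o != Some r ->
  ohead (f (diag r)) = o -> ohead (f (diag q)) = o.
Proof.
move=> oq or fr; apply: (ohead_singles_rename (u := q) (v := r)) fr oq or => j.
by rewrite rename_src rename_tgt.
Qed.

Lemma rcp_head_of_diag r b : b != r -> ohead (f (diag r)) = Some b ->
  forall x, has_prefix [:: b] (f x).
Proof.
move=> br fr.
have f_mark q : q != b -> ohead (f (mark xpred0 b q)) = Some b.
  by move=> qb; apply: (ohead_f_diag_transfer (r := r)) fr => //=; rewrite eq_sym.
have avoid p q y : p != b -> q != b -> (forall j, {subset y j <= [:: p; q]}) ->
    ohead (f y) = Some b.
  by move=> pb qb yL; apply: (ohead_f_anchored_pair f_mark pb qb) => j; apply: yL.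
have two p q y : (forall j, {subset y j <= [:: p; q]}) -> ohead (f y) = Some b.
  (* Renaming b to u turns y into an input over two letters other than b. *)
  move=> yL; apply: (ohead_pinned (a := b)) => // u ub.
  have away c : rename b u c != b by rewrite /rename; case: (c =P b) => [_|/eqP].
  apply: (ohead_rename_to (w2 := f (fun j => map (rename b u) (y j)))).
    by apply: rcp_map => j; rewrite -map_comp; apply: eq_map => c /=; rewrite rename_idem.
  left; apply: (avoid _ _ _ (away p) (away q)) => j _ /mapP[c /yL cpq ->].
  by rewrite !inE in cpq *; case/orP: cpq => /eqP->; rewrite eqxx ?orbT.
apply: (prefix_from_pairs (g := fun=> [:: b])) => // p q y _ /two.
by case: (f y) => //= c w [->]; exists w.
Qed.

Section DiagonalHeads.
Hypothesis f_diag : forall r, ohead (f (diag r)) = Some r.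

Lemma mark_ohead A r p : ohead (f (mark A r p)) = Some r \/ ohead (f (mark A r p)) = Some p.
Proof.
apply: (ohead_rename_to (w2 := f (diag p))); last by right.
by apply: rcp_map => j /=; case: (A j); rewrite ?rename_src ?rename_tgt.
Qed.

Lemma mark_rename A u v r p : rename u v r != rename u v p ->
  ohead (f (mark A r p)) = Some r ->
  ohead (f (mark A (rename u v r) (rename u v p))) = Some (rename u v r).
Proof.
move=> neq fr; have E : map (rename u v) (f (mark A (rename u v r) (rename u v p))) =
                        map (rename u v) (f (mark A r p)).
  by apply: rcp_map => j /=; case: (A j); rewrite rename_idem.
case: (mark_ohead A (rename u v r) (rename u v p)) => // fp.
move: (congr1 ohead E); rewrite !ohead_map fp fr /= rename_idem => -[E'].
by rewrite E' eqxx in neq.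
Qed.

(* The decisive sets form an ultrafilter on the positions. *)
Definition decisive A := forall r p, r != p -> ohead (f (mark A r p)) = Some r.

Lemma decisive_of_pair A r p : r != p -> ohead (f (mark A r p)) = Some r -> decisive A.
Proof.
move=> rp fr r' p' r'p'; have [w [wr wr']] := exists_fresh r r' card3.
have rw : r != w by rewrite eq_sym.
have r'w : r' != w by rewrite eq_sym.
have f1 : ohead (f (mark A r w)) = Some r.
  by have := @mark_rename A p w r p; rewrite rename_src [rename p w r]rename_id //; apply.
have f2 : ohead (f (mark A r' w)) = Some r'.
  by have := @mark_rename A r r' r w; rewrite rename_src [rename r r' w]rename_id //; apply.
by have := @mark_rename A w p' r' w; rewrite rename_src [rename w p' r']rename_id //; apply.
Qed.

Lemma decisive_ext A B : A =1 B -> decisive A -> decisive B.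
Proof.
move=> AB dA r p rp; rewrite -(dA r p rp); congr ohead.
by apply: f_ext => j; rewrite /mark /singles AB.
Qed.

Lemma decisive_compl A : decisive A \/ decisive (predC A).
Proof.
have [r [_ [p [_ rp _]]]] := exists_distinct3 card3.
case: (mark_ohead A r p) => fA; first by left; apply: decisive_of_pair rp fA.
right; apply: (decisive_of_pair (r := p) (p := r)); first by rewrite eq_sym.
by rewrite -fA; congr ohead; apply: f_ext => j; rewrite /mark /singles /=; case: (A j).
Qed.

Lemma decisive_disjoint A B :
  decisive A -> decisive B -> (forall j, A j -> ~~ B j) -> False.
Proof.
move=> dA dB AB; have [r [u [p [ru rp up]]]] := exists_distinct3 card3.
pose l j := if A j then r else if B j then u else p.
have fr : ohead (f (singles l)) = Some r.
  apply: (ohead_singles_rename (u := u) (v := p) _ (dA r p rp)) => [j||//].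
  - by rewrite /l; case: (A j); case: (B j); rewrite ?rename_src ?rename_tgt.
  - by [].
have fu : ohead (f (singles l)) = Some u.
  apply: (ohead_singles_rename (u := r) (v := p) _ (dB u p up)) => [j||//].
  - rewrite /l; case Aj: (A j); last by case: (B j).
    by rewrite (negbTE (AB j Aj)) rename_src rename_tgt.
  - by rewrite /= eq_sym.
by move: fu; rewrite fr => -[ru']; rewrite ru' eqxx in ru.
Qed.

Lemma decisive_meet A B : decisive A -> decisive B -> decisive (predI A B).
Proof.
move=> dA dB; have [r [u [p [ru rp up]]]] := exists_distinct3 card3.
pose l j := if A j && B j then r else if A j then u else p.
have [fu|fr] : ohead (f (singles l)) = Some u \/ ohead (f (singles l)) = Some r.
- apply: (ohead_rename_to (w2 := f (mark A r p))); last by right; apply: dA.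
  apply: rcp_map => j /=; rewrite /l.
  by case: (A j); case: (B j); rewrite /= ?rename_src ?rename_tgt.
- exfalso; apply: (decisive_disjoint (A := fun j => A j && ~~ B j)) dB _ => [|j /andP[]//].
  apply: (decisive_of_pair up).
  apply: (ohead_singles_rename (u := r) (v := p) _ fu) => [j||//].
  + by rewrite /l /=; case: (A j); case: (B j); rewrite /= ?rename_src ?rename_tgt.
  + by rewrite /= eq_sym.
apply: (decisive_of_pair rp).
apply: (ohead_singles_rename (u := u) (v := p) _ fr) => [j||//].
- by rewrite /l /=; case: (A j); case: (B j); rewrite /= ?rename_src ?rename_tgt.
- by [].
Qed.

Lemma decisive_singleton : exists i, decisive (pred1 i).
Proof.
have [r [_ [p [_ rp _]]]] := exists_distinct3 card3.
case: (pickP (fun i => ohead (f (mark (pred1 i) r p)) == Some r)) => [i /eqP fi|none].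
  by exists i; apply: decisive_of_pair rp fi.
have co i : decisive (predC (pred1 i)).
  case: (decisive_compl (pred1 i)) => // di.
  by move: (none i); rewrite (di r p rp) eqxx.
have dT : decisive xpredT by move=> r' p' _; apply: f_diag.
have all_but (l : seq 'I_k) : decisive [pred j | j \notin l].
  elim: l => [|i l IH]; first by apply: decisive_ext dT => j; rewrite inE.
  by apply: decisive_ext (decisive_meet IH (co i)) => j /=; rewrite inE negb_or andbC.
have d0 : decisive xpred0.
  by apply: decisive_ext (all_but (enum 'I_k)) => j; rewrite /= mem_enum.
exfalso; have := d0 r p rp; change (ohead (f (diag p)) = Some r -> False).
by rewrite f_diag => -[pr]; rewrite pr eqxx in rp.
Qed.

Section Dictator.
Variable i : 'I_k.
Hypothesis dec_i : decisive (pred1 i).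

Lemma ohead_f_anchor p q s x : s != p -> s != q ->
  (forall j, {subset x j <= [:: p; q]}) -> ohead (f (upd x i [:: s])) = Some s.
Proof.
move=> sp sq xL; apply: (@ohead_f_anchored_pair (pred1 i) s p q).
- by move=> u us; apply: dec_i; rewrite eq_sym.
- by rewrite eq_sym.
- by rewrite eq_sym.
- by move=> j; rewrite /upd /=; case: (j == i) => //; apply: xL.
Qed.

Lemma prefix_f_unary p y : (forall j, {subset y j <= [:: p]}) -> has_prefix (y i) (f y).
Proof.
move=> yp; have yi : y i = nseq (size (y i)) p.
  by apply/all_pred1P/allP => c /yp; rewrite inE.
(* f y starts with exactly j letters p, and s differs from the letter after them. *)
have [j [rest [fy rp]]] := split_run p (f y).
have [s [sp /neq_odflt s_rest]] := exists_fresh p (odflt p (ohead rest)) card3.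
have yL j' : {subset y j' <= [:: p; p]} by move=> c /yp; rewrite !inE => ->.
have s_yi : s \notin y i by apply/negP => /yp; rewrite inE (negbTE sp).
have := prefix_expand_anchor s_yi (ohead_f_anchor sp sp yL).
rewrite {1}yi fy => /(run_expand_prefix sp rp s_rest) le.
by exists (nseq (j - size (y i)) p ++ rest); rewrite {1}yi catA -nseqD subnKC.
Qed.

Lemma prefix_f_pair p q x : p != q -> (forall j, {subset x j <= [:: p; q]}) ->
  has_prefix (x i) (f x).
Proof.
move=> pq xL; have [r [rp rq]] := exists_fresh p q card3.
pose y j := map (fun=> p) (x j).
have [R fy] : has_prefix (y i) (f y).
  by apply: prefix_f_unary => j c /mapP[? _ ->]; rewrite inE.
have y_fixed j : map (rename q p) (y j) = y j.
  by rewrite -map_comp; apply: eq_map => c /=; rewrite rename_tgt.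
have fx : map (rename q p) (f x) = y i ++ map (rename q p) R.
  rewrite (rcp_map (y := y)) => [|j]; first by rewrite fy map_cat y_fixed.
  rewrite y_fixed; apply/eq_in_map => c /xL.
  by rewrite !inE => /orP[]/eqP->; rewrite ?rename_src ?rename_tgt.
(* After renaming q to p, f x starts like f y, so its first size (x i) letters avoid r. *)
have r_take : r \notin take (size (x i)) (f x).
  apply/negP => /(map_f (rename q p)); rewrite map_take fx take_size_cat ?size_map //.
  by rewrite rename_id // => /mapP[c _ rp']; rewrite rp' eqxx in rp.
have r_xi : r \notin x i by apply/negP => /xL; rewrite !inE (negbTE rp) (negbTE rq).
exact: expand_prefix r_take (prefix_expand_anchor r_xi (ohead_f_anchor rp rq xL)).
Qed.

Lemma prefix_f_of_dictator x : has_prefix (x i) (f x).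
Proof.
apply: (prefix_from_pairs (g := fun x => x i)) => [P y | p q y]; first exact: filter_id.
exact: prefix_f_pair.
Qed.

End Dictator.

End DiagonalHeads.

Lemma rcp_trichotomy :
  (exists b, forall x, has_prefix [:: b] (f x)) \/
  (exists i, forall x, has_prefix (x i) (f x)) \/ (forall x, f x = [::]).
Proof.
case: (pickP (fun r => ohead (f (diag r)) != Some r)) => [r|diagonal].
  case E: (ohead (f (diag r))) => [b|] br.
    by left; exists b; apply: rcp_head_of_diag E.
  by right; right; apply: (rcp_nil_of_diag (r := r)); case: (f (diag r)) E.
have f_diag r : ohead (f (diag r)) = Some r by apply/eqP/negbFE/diagonal.
have [i dec_i] := decisive_singleton f_diag.
by right; left; exists i; apply: prefix_f_of_dictator dec_i.
Qed.

End RCPFunction.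

Theorem mainTheorem18 (Sigma : finType) (k : nat) (f : ('I_k -> seq Sigma) -> seq Sigma) :
  2 < #|Sigma| -> 0 < k -> RCP f ->
  let C1 := exists b : Sigma, forall x : 'I_k -> seq Sigma, has_prefix [:: b] (f x) in
  let C2 := exists i : 'I_k, forall x : 'I_k -> seq Sigma, has_prefix (x i) (f x) in
  let C3 := forall x : 'I_k -> seq Sigma, f x = [::] in
  (C1 \/ C2 \/ C3) /\ ~ (C1 /\ C2) /\ ~ (C1 /\ C3) /\ ~ (C2 /\ C3).
Proof.
move=> card3 _ f_RCP C1 C2 C3.
split; first by apply: rcp_trichotomy.
have [a _] := exists_distinct3 card3.
split; [|split]; rewrite /C1 /C2 /C3.
- move=> [[c fc] [i fi]]; have [e [ec _]] := exists_fresh c c card3.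
  have [r1 E1] := fc (fun=> [:: e]); have [r2] := fi (fun=> [:: e]).
  by rewrite E1 => -[ce]; rewrite ce eqxx in ec.
- by move=> [[c fc] f0]; have [r] := fc (fun=> [::]); rewrite f0.
- by move=> [[i fi] f0]; have [r] := fi (fun=> [:: a]); rewrite f0.
Qed.
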